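(* For every integer $\ell\ge2$ there exist two trees $T_1,T_2$ with the same number of vertices such that $D(T_1)>D(T_2)$ and $W_{2\ell}(T_1)>W_{2\ell}(T_2)$. In particular, $D(T_1)<D(T_2)$ does not in general imply $W_{2\ell}(T_1)>W_{2\ell}(T_2)$ for trees of the same order.
   Context: For a tree $T$, $D(T)=\sum_{x,y\in V(T)} d(x,y)$, where $d$ is the graph distance, and $W_m(T)$ denotes the number of closed walks of length $m$ in $T$. *)

From mathcomp Require Import all_boot.
Set Implicit Arguments. Unset Strict Implicit. Unset Printing Implicit Defensive.

Section Graphs.
Variable T : finType.
Variable e : rel T.

Definition simple_graph : Prop := symmetric e /\ irreflexive e.

Definition walk_of_length (n : nat) (x y : T) : bool :=
  [exists t : (n.+1).-tuple T,
     [&& thead t == x, path e (thead t) (behead t) & last (thead t) (behead t) == y]].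

Definition connected_graph : Prop := forall x y : T, connect e x y.

(* number of (undirected) edges; each edge is counted twice in ordered pairs *)
Definition num_edges : nat := #|[set p : T * T | e p.1 p.2]| %/ 2.

Definition is_tree : Prop :=
  [/\ simple_graph, 0 < #|T|, connected_graph & num_edges = #|T| - 1].

(* graph distance: the least n with a walk of length n from x to y
   (searched among n < |T|, which suffices in a connected graph) *)
Definition dist (x y : T) : nat :=
  find (fun n => walk_of_length n x y) (iota 0 #|T|).

Definition wiener_D : nat := \sum_(x : T) \sum_(y : T) dist x y.

Definition closed_walks (m : nat) : nat :=
  #|[set t : (m.+1).-tuple T |
       path e (thead t) (behead t) && (last (thead t) (behead t) == thead t)]|.
End Graphs.

From mathcomp Require Import all_boot zify.
Set Implicit Arguments. Unset Strict Implicit. Unset Printing Implicit Defensive.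

(* Take T1 a broom: a path on 198 vertices with 202 further leaves hung on one
   end c, and T2 the binary heap on 400 vertices.  The handle alone gives
   D(T1) >= (198^3 - 198)/3, while T2 has depth 8, so D(T2) <= 16 * 400^2, which
   is smaller.  On the other hand the walks c, y1, c, y2, ..., c through leaves
   give W_2l(T1) >= 202^l, while T2 has maximum degree 3, so W_2l(T2) <= 400 * 9^l. *)

Definition distn (i j : nat) : nat := (i - j) + (j - i).

Section Walks.
Variables (T : finType) (e : rel T).

Lemma walk_of_lengthP m x y :
  reflect (exists2 s : seq T, size s = m & path e x s && (last x s == y))
          (walk_of_length e m x y).
Proof.
apply: (iffP existsP) => [[t /and3P[/eqP <- Ht Hy]] | [s Hs /andP[Hp Hy]]].
  by exists (behead t); rewrite ?size_behead ?size_tuple ?Ht.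
have Hs' : size s == m by rewrite Hs.
by exists (cons_tuple x (Tuple Hs')); rewrite /thead /tnth /= eqxx Hp.
Qed.

Lemma walk_cat m1 m2 x y z :
  walk_of_length e m1 x y -> walk_of_length e m2 y z ->
  walk_of_length e (m1 + m2) x z.
Proof.
move=> /walk_of_lengthP[s1 <- /andP[P1 /eqP L1]] /walk_of_lengthP[s2 <- /andP[P2 L2]].
apply/walk_of_lengthP; exists (s1 ++ s2); first by rewrite size_cat.
by rewrite cat_path last_cat L1 P1 P2.
Qed.

Lemma walk_edge x y : e x y -> walk_of_length e 1 x y.
Proof. by move=> Hxy; apply/walk_of_lengthP; exists [:: y]; rewrite //= Hxy eqxx. Qed.

Lemma walk_lipschitz (h : T -> nat) :
  (forall u v, e u v -> h u <= (h v).+1) ->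
  forall m x y, walk_of_length e m x y -> h x <= h y + m.
Proof.
move=> Hh m x y /walk_of_lengthP[s <- /andP[P /eqP <-]].
elim: s x P => [|z s IH] x /=; first by rewrite addn0.
by case/andP=> /Hh Hxz /IH; lia.
Qed.

Lemma dist_leq_walk m x y : walk_of_length e m x y -> dist e x y <= m.
Proof.
move=> Hw; rewrite /dist; have [Hm | HTm] := ltnP m #|T|.
  rewrite leqNgt; apply/negP => /(before_find 0).
  by rewrite nth_iota // add0n Hw.
by apply: leq_trans HTm; rewrite -{2}(size_iota 0 #|T|) find_size.
Qed.

Lemma dist_refl x : dist e x x = 0.
Proof.
by apply/eqP; rewrite -leqn0 dist_leq_walk //; apply/walk_of_lengthP; exists [::]; rewrite //= eqxx.
Qed.

Lemma wiener_D_leq k : (forall x y, dist e x y <= k) -> wiener_D e <= #|T| ^ 2 * k.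
Proof.
move=> Hk; apply: leq_trans (_ : \sum_(x : T) \sum_(y : T) k <= _).
  by apply: leq_sum => x _; apply: leq_sum => y _.
by rewrite !sum_nat_const mulnA -mulnn.
Qed.

Hypothesis e_sym : symmetric e.

Lemma walk_rev m x y : walk_of_length e m x y -> walk_of_length e m y x.
Proof.
move=> /walk_of_lengthP[s <- /andP[P /eqP L]]; apply/walk_of_lengthP.
exists (rev (belast x s)); first by rewrite size_rev size_belast.
rewrite -L rev_path (sub_path _ P) => [|a b]; last by rewrite e_sym.
by case: s {P L} => [|z s] //=; rewrite rev_cons last_rcons.
Qed.

Hypothesis e_conn : connected_graph e.

(* [dist] only searches lengths below [#|T|]; a shortest walk is a duplicate-free path, so it is found. *)
Lemma walk_dist x y : walk_of_length e (dist e x y) x y.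
Proof.
have [p /shortenP[q Q Uq _] Ly] := connectP (e_conn x y).
have Hq : size q < #|T| by have := max_card (mem (x :: q)); rewrite (card_uniqP Uq).
have Hw : has (fun n => walk_of_length e n x y) (iota 0 #|T|).
  apply/hasP; exists (size q); first by rewrite mem_iota.
  by apply/walk_of_lengthP; exists q; rewrite // Q -Ly eqxx.
have := nth_find 0 Hw; rewrite has_find size_iota in Hw.
by rewrite nth_iota // add0n.
Qed.

Lemma dist_sym x y : dist e x y = dist e y x.
Proof.
by apply/anti_leq; rewrite !dist_leq_walk // walk_rev // walk_dist.
Qed.

Lemma dist_triangle x y z : dist e x z <= dist e x y + dist e y z.
Proof. exact/dist_leq_walk/walk_cat/walk_dist/walk_dist. Qed.

Lemma dist_lipschitz (h : T -> nat) x y :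
  (forall u v, e u v -> h u <= (h v).+1) -> distn (h x) (h y) <= dist e x y.
Proof.
move=> Hh; have := walk_lipschitz Hh (walk_dist x y).
have := walk_lipschitz Hh (walk_dist y x); rewrite dist_sym /distn; lia.
Qed.

End Walks.

Section ClosedWalkBounds.
Variables (T : finType) (e : rel T).

Lemma tuple_eta_seq m (t : m.+1.-tuple T) : t = thead t :: behead t :> seq T.
Proof. by rewrite [in LHS](tuple_eta t). Qed.

Section LocalLabelling.
Variables (d : nat) (label : T -> T -> 'I_d).
Hypothesis label_inj : forall x, {in e x &, injective (label x)}.

Lemma path_labels_inj x s1 s2 :
  path e x s1 -> path e x s2 -> pairmap label x s1 = pairmap label x s2 -> s1 = s2.
Proof.
elim: s1 s2 x => [|y1 s1 IH] [|y2 s2] x //= /andP[E1 P1] /andP[E2 P2] [L E].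
have Ey : y1 = y2 by apply: (label_inj E1 E2).
by rewrite -Ey in P2 E *; rewrite (IH s2 y1).
Qed.

Lemma closed_walks_leq_labels m : closed_walks e m <= #|T| * d ^ m.
Proof.
pose code (t : m.+1.-tuple T) : T * m.-tuple 'I_d :=
  (thead t, Tuple (pairmap_tupleP label (thead t) (behead_tuple t))).
rewrite /closed_walks -(@card_in_imset _ _ code); last first.
  move=> t1 t2; rewrite !inE => /andP[P1 _] /andP[P2 _] [Eh El].
  rewrite -Eh in P2 El; apply: val_inj.
  by rewrite /= (tuple_eta_seq t1) (tuple_eta_seq t2) -Eh (path_labels_inj P1 P2 El).
by apply: leq_trans (max_card _) _; rewrite card_prod card_tuple card_ord.
Qed.

End LocalLabelling.

Hypothesis e_sym : symmetric e.

Definition star_walk (c : T) (s : seq T) : seq T := flatten [seq [:: y; c] | y <- s].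

Lemma closed_walks_geq_star c l : #|e c| ^ l <= closed_walks e (2 * l).
Proof.
have size_sw (s : l.-tuple {y | e c y}) : size (star_walk c (map val s)) == 2 * l.
  rewrite /star_walk size_flatten /shape -map_comp sumnE big_map.
  by rewrite big_const_seq count_predT size_tuple iter_addn_0 mul2n.
pose walk s := cons_tuple c (Tuple (size_sw s)).
have walk_inj : injective walk.
  move=> s1 s2 /(congr1 val) [] E; apply/val_inj/(inj_map val_inj).
  by elim: (map val s1) (map val s2) E => [|y1 s1' IH] [|y2 s2'] //= [-> /IH ->].
have -> : #|e c| = #|{: {y | e c y}}| by rewrite card_sig; apply: eq_card.
rewrite -card_tuple -(card_codom walk_inj) subset_leq_card //.
apply/subsetP => _ /codomP[s ->]; rewrite inE /=.
have Hs : all (e c) (map val s) by apply/allP => _ /mapP[y _ ->]; exact: valP.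
elim: (map val s) Hs => [|y s' IH] //= /andP[Ecy /IH /andP[-> ->]].
by rewrite Ecy e_sym Ecy.
Qed.

End ClosedWalkBounds.

Section ParentTree.
Variables (n : nat) (par : nat -> nat).
Hypothesis par_lt : forall x, 0 < x -> x <= n -> par x < x.

Definition parent_tree : rel 'I_n.+1 :=
  fun x y => ((0 < x) && (par x == y)) || ((0 < y) && (par y == x)).

Definition parent (x : 'I_n.+1) : 'I_n.+1 := inord (par x).

Lemma parentE (x : 'I_n.+1) : 0 < x -> val (parent x) = par x.
Proof. by move=> Hx; rewrite /parent /= inordK // (ltn_trans (par_lt Hx (ltn_ord x))). Qed.

Lemma parent_tree_sym : symmetric parent_tree.
Proof. by move=> x y; rewrite /parent_tree orbC. Qed.

Lemma parent_tree_irr : irreflexive parent_tree.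
Proof.
move=> x; rewrite /parent_tree orbb; apply/negP => /andP[Hx /eqP Ex].
by have := par_lt Hx (ltn_ord x : x <= n); rewrite Ex ltnn.
Qed.

Lemma parent_tree_parent (x : 'I_n.+1) : 0 < x -> parent_tree x (parent x).
Proof. by move=> Hx; rewrite /parent_tree Hx parentE // eqxx. Qed.

Lemma parent_tree_connected : connected_graph parent_tree.
Proof.
have to_root (x : 'I_n.+1) : connect parent_tree x ord0.
  elim/ltn_ind: {x}(val x) {-2}x (erefl (val x)) => k IH x Ex.
  have [x0 | x_gt0] := posnP x.
    by rewrite (_ : x = ord0) //; apply: val_inj.
  apply: connect_trans (connect1 (parent_tree_parent x_gt0)) (IH _ _ _ erefl).
  by rewrite parentE // -Ex par_lt // -ltnS.
move=> x y; apply: connect_trans (to_root x) _.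
by rewrite (sym_connect_sym parent_tree_sym).
Qed.

Lemma card_parent_tree_arcs :
  #|[set a : 'I_n.+1 * 'I_n.+1 | parent_tree a.1 a.2]| = n + n.
Proof.
set V' := [set~ (@ord0 n)].
have HV' : #|V'| = n by rewrite cardsC1 card_ord.
have ne0 (x : 'I_n.+1) : (x \in V') = (0 < x).
  by rewrite !inE lt0n; congr negb; apply/eqP/eqP => [-> | /val_inj].
have -> : [set a | parent_tree a.1 a.2] =
          [set (x, parent x) | x in V'] :|: [set (parent x, x) | x in V'].
  apply/setP => -[x y]; rewrite !inE /=; congr orb.
    apply/andP/imsetP => [[Hx /eqP Ey] | [z]]; last by rewrite ne0 => Hz [-> ->]; rewrite Hz parentE.
    by exists x; rewrite ?ne0 //; congr pair; apply: val_inj; rewrite parentE.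
  apply/andP/imsetP => [[Hy /eqP Ex] | [z]]; last by rewrite ne0 => Hz [-> ->]; rewrite Hz parentE.
  by exists y; rewrite ?ne0 //; congr pair; apply: val_inj; rewrite parentE.
rewrite cardsU !card_imset ?HV'; try by move=> ? ? [].
suff -> : [set (x, parent x) | x in V'] :&: [set (parent x, x) | x in V'] = set0.
  by rewrite cards0 subn0.
apply/setP => -[x y]; rewrite !inE; apply/negP => /andP[].
move=> /imsetP[u Hu [-> ->]] /imsetP[v Hv [Epu Epv]]; rewrite !ne0 in Hu Hv.
have := par_lt Hu (ltn_ord u); rewrite -(parentE Hu) Epv.
have := par_lt Hv (ltn_ord v); rewrite -(parentE Hv) -Epu.
by move=> /ltn_trans lt_u /lt_u; rewrite ltnn.
Qed.

Lemma parent_tree_is_tree : is_tree parent_tree.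
Proof.
split; [split | | |].
- exact: parent_tree_sym.
- exact: parent_tree_irr.
- by rewrite card_ord.
- exact: parent_tree_connected.
- by rewrite /num_edges card_parent_tree_arcs card_ord subn1 /=; lia.
Qed.

End ParentTree.

Lemma sum_distn p : 3 * (\sum_(i < p) \sum_(j < p) distn i j) + p = p ^ 3.
Proof.
have sum_diff q : 2 * (\sum_(i < q) (q - i)) = q * q.+1.
  elim: q => [|q IH]; first by rewrite big_ord0.
  rewrite big_ord_recl subn0 (eq_bigr (fun i : 'I_q => q - i)) => [|i _].
    by rewrite mulnDr IH; lia.
  by rewrite lift0 subSS.
have distn_le i j : i <= j -> distn i j = j - i by rewrite /distn => /eqP ->.
rewrite !expnS expn0 muln1; elim: p => [|p IH]; first by rewrite big_ord0.
have row (i : 'I_p) : \sum_(j < p.+1) distn i j = \sum_(j < p) distn i j + (p - i).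
  by rewrite big_ord_recr distn_le // ltnW.
have last_row : \sum_(j < p.+1) distn p j = \sum_(i < p) (p - i).
  rewrite big_ord_recr /= /distn subnn !addn0.
  by apply: eq_bigr => i _; rewrite (eqP (ltnW (ltn_ord i))) addn0.
rewrite big_ord_recr /= (eq_bigr _ (fun i _ => row i)) big_split /= last_row.
move: IH (sum_diff p).
by move: (\sum_(i < p) _) (\sum_(i < p) (p - i)) => S D; lia.
Qed.

Section Heap.
Variable n : nat.

Definition heap_par (x : nat) : nat := x.-1 %/ 2.

Lemma heap_par_lt x : 0 < x -> x <= n -> heap_par x < x.
Proof. rewrite /heap_par; lia. Qed.

Definition heap : rel 'I_n.+1 := parent_tree heap_par.

Lemma heap_dist_root k (x : 'I_n.+1) : x.+1 < 2 ^ k.+1 -> dist heap x ord0 <= k.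
Proof.
have heap_conn : connected_graph heap := parent_tree_connected heap_par_lt.
elim: k x => [|k IH] x Hx.
  by rewrite (_ : x = ord0) ?dist_refl //; apply: val_inj => /=; move: Hx; rewrite expn1; lia.
have [x0 | x_gt0] := posnP x.
  by rewrite (_ : x = ord0) ?dist_refl //; apply: val_inj.
apply: leq_trans (dist_triangle heap_conn x (parent heap_par x) ord0) _.
rewrite -[k.+1]add1n leq_add //.
  exact/dist_leq_walk/walk_edge/(parent_tree_parent heap_par_lt).
by apply: IH; rewrite /= (parentE heap_par_lt) // /heap_par; move: Hx; rewrite (expnS 2 k.+1); lia.
Qed.

Lemma heap_wiener_D k : n.+1 < 2 ^ k.+1 -> wiener_D heap <= n.+1 ^ 2 * k.*2.
Proof.
move=> n_lt; rewrite -{2}(card_ord n.+1); apply: wiener_D_leq => x y.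
have heap_conn : connected_graph heap := parent_tree_connected heap_par_lt.
have root_le (z : 'I_n.+1) : dist heap z ord0 <= k.
  by apply: heap_dist_root; apply: leq_ltn_trans n_lt; rewrite ltnS -ltnS.
apply: leq_trans (dist_triangle heap_conn x ord0 y) _.
by rewrite -addnn leq_add // dist_sym ?root_le //; exact: parent_tree_sym.
Qed.

Definition heap_label (x y : 'I_n.+1) : 'I_3 :=
  inord (if (0 < x) && (heap_par x == y) then 0 else if y == x.*2.+1 :> nat then 1 else 2).

Lemma heap_label_inj x : {in heap x &, injective (heap_label x)}.
Proof.
move=> y y' Hy Hy' /(congr1 val); rewrite /= !inordK; try by do ?case: ifP.
move: Hy Hy'; rewrite -!topredE /= /heap /parent_tree /heap_par => Hy Hy' E.
apply: val_inj => /=; move: Hy Hy' E.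
by case/orP=> /andP[? /eqP ?]; case/orP=> /andP[? /eqP ?]; do 4?case: ifP; lia.
Qed.

Lemma heap_closed_walks m : closed_walks heap m <= n.+1 * 3 ^ m.
Proof. by have := closed_walks_leq_labels heap_label_inj m; rewrite card_ord. Qed.

End Heap.

Section Broom.
Variables n p : nat.

Definition broom_par (x : nat) : nat := if x < p then x.-1 else 0.

Lemma broom_par_lt x : 0 < x -> x <= n -> broom_par x < x.
Proof. by rewrite /broom_par; case: ifP; lia. Qed.

Definition broom : rel 'I_n.+1 := parent_tree broom_par.

Definition broom_height (x : 'I_n.+1) : nat := if x < p then nat_of_ord x else 1.

Lemma broom_height_lipschitz u v : broom u v -> broom_height u <= (broom_height v).+1.
Proof.
rewrite /broom /parent_tree /broom_height /broom_par.
by case/orP => /andP[? /eqP E]; move: E; do 3?case: ifP; lia.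
Qed.

Lemma broom_wiener_D : p <= n.+1 -> \sum_(i < p) \sum_(j < p) distn i j <= wiener_D broom.
Proof.
move=> p_le.
have broom_sym : symmetric broom := parent_tree_sym _.
have broom_conn : connected_graph broom := parent_tree_connected broom_par_lt.
rewrite /wiener_D (big_ord_widen _ (fun i => \sum_(j < p) distn i j) p_le) big_mkcond.
apply: leq_sum => x _; case: ifP => // x_lt.
rewrite (big_ord_widen _ (distn x) p_le) big_mkcond.
apply: leq_sum => y _; case: ifP => // y_lt.
apply: leq_trans (dist_lipschitz broom_sym broom_conn x y broom_height_lipschitz).
by rewrite /broom_height x_lt y_lt.
Qed.

Lemma broom_root_degree : 0 < p -> n.+1 - p <= #|broom ord0|.
Proof.
move=> p_gt0; pose bristle (k : 'I_(n.+1 - p)) : 'I_n.+1 := inord (p + k).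
have bristleE k : val (bristle k) = p + k by rewrite /= inordK //; have := ltn_ord k; lia.
rewrite -[n.+1 - p]card_ord -(card_codom (_ : injective bristle)); last first.
  by move=> k k' /(congr1 val); rewrite !bristleE => /addnI /val_inj.
apply/subset_leq_card/subsetP => _ /codomP[k ->].
rewrite -topredE /= /broom /parent_tree /broom_par bristleE; apply/orP; right.
by rewrite addn_gt0 p_gt0 /= ltnNge leq_addr.
Qed.

Lemma broom_closed_walks l : 0 < p -> (n.+1 - p) ^ l <= closed_walks broom (2 * l).
Proof.
move=> p_gt0; apply: leq_trans (closed_walks_geq_star (parent_tree_sym _) ord0 l).
by case: l => // l; rewrite leq_exp2r // broom_root_degree.
Qed.

End Broom.

Lemma walk_bound_gap l : 2 <= l -> 400 * 3 ^ (2 * l) < 202 ^ l.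
Proof.
move=> l_ge2; rewrite -(subnK l_ge2) expnM expnD [202 ^ _]expnD.
have : 9 ^ (l - 2) <= 202 ^ (l - 2) by elim: (l - 2) => // k IH; rewrite !expnS leq_mul.
have : 0 < 202 ^ (l - 2) by rewrite expn_gt0.
by move: (9 ^ _) (202 ^ _) => a b; lia.
Qed.

Theorem mainTheorem8 :
  forall l : nat, 2 <= l ->
  exists (n : nat) (e1 e2 : rel 'I_n),
    [/\ is_tree e1, is_tree e2,
        wiener_D e2 < wiener_D e1
      & closed_walks e2 (2 * l) < closed_walks e1 (2 * l)].
Proof.
move=> l l_ge2; exists 400, (@broom 399 198), (@heap 399); split.
- exact: parent_tree_is_tree (@broom_par_lt 399 198).
- exact: parent_tree_is_tree (@heap_par_lt 399).
- apply: leq_ltn_trans (@heap_wiener_D 399 8 isT) _.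
  apply: leq_trans (@broom_wiener_D 399 198 isT).
  by have := sum_distn 198; lia.
- apply: leq_ltn_trans (@heap_closed_walks 399 _) _.
  exact: leq_trans (walk_bound_gap l_ge2) (@broom_closed_walks 399 198 l isT).
Qed.
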